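(* Let $k_{ON},k_{OFF},k_I,\alpha_{p_1},\alpha_{p_2},\gamma_{p_1},\gamma_{m_2},\alpha_{m_2,I},\beta_{m_2,A},T_c>0$, $v_b>1$, $n\ge 1$, and set $a_1=k_{ON}$, $a_3=k_{ON}+k_{OFF}$, $a_4=k_I$, $a_5=\alpha_{p_1}$, $a_6=\gamma_{p_1}$, $a_7=\alpha_{m_2,I}$, $a_8=\gamma_{m_2}+\alpha_{p_1}+\alpha_{p_2}$, $a_9=\beta_{m_2,A}/v_b$, $a_{10}=v_b/T_c^n$, $a_{11}=1/T_c^n$. Consider solutions $(x,y,s,v)$ of \[ \begin{aligned} x' &= a_1 + (a_4-a_1)y - \Big(a_3 + a_9\frac{1+a_{10}v^n}{1+a_{11}v^n}\Big)x,\\ y' &= a_9\frac{1+a_{10}v^n}{1+a_{11}v^n}x - a_4 y,\\ s' &= a_7x - a_8 s,\\ v' &= a_5 s - a_6 v, \end{aligned} \] with nonnegative initial conditions and $x(0)+y(0)\le 1$. Then there exist positive constants $m_x,m_y$ such that $0<m_x\le \liminf_{t\to\infty}x(t)$ and $0<m_y\le\liminf_{t\to\infty}y(t)$.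
   Context: Here $x=\mathrm{LTR}_I$, $y=\mathrm{LTR}_A$, $s=\mathrm{env}_I$, $v=\mathrm{Tat}$ in a model of HIV-1 transcription in which LTR proportions are conserved, $\mathrm{LTR}_R=1-x-y\ge 0$, so that $x,y\in[0,1]$. *)

From HB Require Import structures.
From mathcomp Require Import all_boot all_order all_algebra.
From mathcomp Require Import all_classical all_reals all_analysis.
Set Implicit Arguments. Unset Strict Implicit. Unset Printing Implicit Defensive.
Import Order.TTheory GRing.Theory Num.Theory.
Import numFieldNormedType.Exports.
Local Open Scope classical_set_scope.
Local Open Scope ring_scope.

Definition liminf_infty (R : realType) (f : R -> R) : \bar R :=
  ereal_sup [set ereal_inf [set (f t)%:E | t in [set t | T <= t]] | T in [set: R]].

(* The (x, y) subsystem sees the Hill term only through the bounds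
   a9 <= H w <= a9 * vb.
   First, the simplex x, y >= 0, x + y <= 1 is forward invariant: the squared
   distance N of (x, y, 1 - x - y) to the nonnegative orthant vanishes at 0 and
   satisfies N' <= C N, hence stays 0 by Gronwall.  On the simplex
   x' >= mu - c x with mu = min kON kI, and once x >= mx, y' >= a9 mx - kI y.
   A linear differential inequality f' >= d - c f forces f >= d / (2 c)
   eventually, since expR (c t) (f t - d / c) is nondecreasing. *)

From HB Require Import structures.
From mathcomp Require Import all_boot all_order all_algebra.
From mathcomp Require Import all_classical all_reals all_analysis.
From mathcomp Require Import ring lra.
Import Order.TTheory GRing.Theory Num.Theory.
Import numFieldNormedType.Exports.
Local Open Scope classical_set_scope.
Local Open Scope ring_scope.

Section Comparison.
Context {R : realType}.

Lemma integrating_factor_ge (f df : R -> R) (T c : R) :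
  {within `[T, +oo[, continuous f} ->
  (forall t, T < t -> is_derive t 1 f (df t)) ->
  (forall t, T < t -> - c * f t <= df t) ->
  forall t, T <= t -> expR (c * T) * f T <= expR (c * t) * f t.
Proof.
move=> fc fd f_ge t Tt.
pose g u := expR (c * u) * f u.
have gd u : T < u -> is_derive u 1 g (expR (c * u) * (df u + c * f u)).
  move=> /fd dft; apply: is_derive_eq.
  by rewrite /GRing.scale /=; ring.
apply: (@ger0_derive1_ndecry R g T _ _ _ T t) => //.
- by move=> u; rewrite in_itv /= andbT => /gd [].
- move=> u; rewrite in_itv /= andbT => Tu.
  rewrite derive1E (derive_val (is_derive := gd u Tu)).
  by rewrite mulr_ge0 ?expR_ge0 // -lerBlDr sub0r -mulNr f_ge.
- move=> u; apply: continuousM (fc u).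
  apply: continuous_subspaceT => w.
  by apply: differentiable_continuous; apply/derivable1_diffP; apply: ex_derive.
Qed.

Lemma gronwall_le0 [N dN : R -> R] [C : R] :
  {within `[0, +oo[, continuous N} ->
  (forall t : R, 0 < t -> is_derive t 1 N (dN t)) ->
  (forall t : R, 0 < t -> dN t <= C * N t) ->
  N 0 <= 0 -> forall [t : R], 0 <= t -> N t <= 0.
Proof.
move=> Nc Nd N_le N0 t t0.
have := @integrating_factor_ge (fun u => - N u) (fun u => - dN u) 0 (- C).
rewrite mulr0 expR0 mul1r => /(_ _ _ _ t t0) mono.
have : 0 <= expR (- C * t) * - N t.
  apply: le_trans (mono _ _ _); first by rewrite oppr_ge0.
  - by move=> u; apply: continuousN; exact: Nc.
  - by move=> u /Nd; exact: is_deriveN.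
  - by move=> u /N_le; rewrite mulrNN mulNr lerN2.
by rewrite pmulr_rge0 ?expR_gt0 // oppr_ge0.
Qed.

Lemma eventually_ge_of_deriv_ge (f df : R -> R) (c d : R) : 0 < c -> 0 < d ->
  (\forall t \near +oo, is_derive (t : R) 1 f (df t)) ->
  (\forall t \near +oo, d - c * f t <= df t) ->
  \forall t \near +oo, d / (2 * c) <= f t.
Proof.
move=> c0 d0 fd f_ge.
have [M [_ HM]] : \forall t \near +oo,
    is_derive (t : R) 1 f (df t) /\ d - c * f t <= df t.
  by near=> t; split; near: t.
pose T := M + 1.
have MT : M < T by rewrite ltrDl.
pose K := expR (c * T) * (f T - d / c).
have gd u : M < u -> is_derive u 1 (fun t => f t - d / c) (df u).
  by move=> /HM[fdu _]; apply: is_derive_eq; rewrite subr0.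
have g_ge : forall t, T <= t -> K <= expR (c * t) * (f t - d / c).
  apply: integrating_factor_ge => [||u Tu].
  - apply: derivable_within_continuous => u; rewrite in_itv /= andbT => Tu.
    by have [] := gd u (lt_le_trans MT Tu).
  - by move=> u Tu; exact: gd (lt_trans MT Tu).
  - have [_] := HM u (lt_trans MT Tu).
    by rewrite mulrBr !mulNr opprK mulrCA divff ?gt_eqF // mulr1 addrC.
near=> t.
have /g_ge K_le : T <= t by near: t; apply: nbhs_pinfty_ge; rewrite num_real.
have : - 2 * K / d <= t by near: t; apply: nbhs_pinfty_ge; rewrite num_real.
rewrite ler_pdivrMr // => K_ge.
(* [expR (c * t) > c * t] eventually absorbs the constant [K]. *)
have expR_gt : d * t / 2 < d / (2 * c) * expR (c * t).
  have -> : d * t / 2 = d / (2 * c) * (c * t) by field; rewrite gt_eqF.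
  rewrite ltr_pM2l ?divr_gt0 ?mulr_gt0 //.
  by have := expR_ge1Dx (c * t); lra.
have : 0 < expR (c * t) * (f t - d / c + d / (2 * c)) by rewrite mulrDr; lra.
rewrite pmulr_rgt0 ?expR_gt0 //.
have -> : d / c = d / (2 * c) + d / (2 * c) by field; rewrite gt_eqF.
lra.
Unshelve. all: by end_near.
Qed.

Lemma liminf_infty_ge (f : R -> R) (m : R) :
  (\forall t \near +oo, m <= f t) -> (m%:E <= liminf_infty f)%E.
Proof.
move=> [M [_ HM]].
apply: (@le_trans _ _ (ereal_inf [set (f t)%:E | t in [set t | M + 1 <= t]])).
  apply: le_ereal_inf_tmp => _ [t /= Mt <-]; rewrite lee_fin; apply: HM.
  by apply: lt_le_trans Mt; rewrite ltrDl.
by apply: ereal_sup_ubound; exists (M + 1).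
Qed.
End Comparison.

Section NegativePartSquare.
Context {R : realType}.
Implicit Types a b u h : R.

Definition negsq u : R := Num.min u 0 ^+ 2.

Lemma min0_le0 a : Num.min a 0 <= 0.
Proof. by rewrite ge_min lexx orbT. Qed.

Lemma min0_mulr a : Num.min a 0 * a = Num.min a 0 ^+ 2.
Proof. by rewrite expr2; case: leP; rewrite ?mul0r. Qed.

Lemma min0_mul_le a b : Num.min a 0 * b <= Num.min a 0 * Num.min b 0.
Proof. by apply: ler_wnM2l; [exact: min0_le0 | rewrite ge_min lexx]. Qed.

Lemma negsq_ge0 u : 0 <= negsq u.
Proof. exact: sqr_ge0. Qed.

Lemma negsq_eq0 u : (negsq u == 0) = (0 <= u).
Proof. by rewrite sqrf_eq0; case: leP => [|/lt_eqF]; rewrite ?eqxx. Qed.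

Lemma is_derive_negsq u : is_derive u 1 negsq (2 * Num.min u 0).
Proof.
have taylor h : `|negsq (u + h) - negsq u - 2 * Num.min u 0 * h| <= h ^+ 2.
  rewrite /negsq ler_norml.
  by case: (leP u 0) => hu; case: (leP (u + h) 0) => huh;
    apply/andP; split; nra.
have quot : (fun h => h^-1 *: ((negsq \o shift u) (h *: 1) - negsq u)) @ 0^'
    --> 2 * Num.min u 0.
  apply/cvgrPdist_le => /= e e0; near=> h.
  have h0 : h != 0 by near: h; exact: nbhs_dnbhs_neq.
  have he : `|h| < e by near: h; exact: dnbhs0_lt.
  have -> : 2 * Num.min u 0 - h^-1 *: (negsq (h * 1 + u) - negsq u)
      = - h^-1 * (negsq (u + h) - negsq u - 2 * Num.min u 0 * h).
    by rewrite mulr1 [h + u]addrC -[_ *: _]/(_ * _); field.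
  rewrite normrM normrN normrV ?unitfE // ler_pdivrMl ?normr_gt0 //.
  apply: le_trans (taylor h) _.
  by rewrite -real_normK ?num_real // expr2 ler_wpM2l // ltW.
apply: DeriveDef; last exact: cvg_lim quot.
by apply/cvg_ex; exists (2 * Num.min u 0).
Unshelve. all: by end_near.
Qed.

Lemma continuous_negsq : continuous negsq.
Proof.
move=> u; apply: differentiable_continuous; apply/derivable1_diffP.
by have [] := is_derive_negsq u.
Qed.
End NegativePartSquare.

Section SimplexInvariance.
Context {R : realType} {a1 a4 k c : R}.
Hypotheses (a1_ge0 : 0 <= a1) (a4_ge0 : 0 <= a4) (k_ge0 : 0 <= k).

Let dx (x y h : R) := a1 + (a4 - a1) * y - (a1 + k + h) * x.
Let dy (x y h : R) := h * x - a4 * y.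

Lemma negsq_penalty_deriv_le (x y h : R) : 0 <= h <= c ->
  2 * Num.min x 0 * dx x y h + 2 * Num.min y 0 * dy x y h
    + 2 * Num.min (1 - x - y) 0 * (- dx x y h - dy x y h)
  <= (a1 + k + a4 + c) * (negsq x + negsq y + negsq (1 - x - y)).
Proof.
move=> /andP[h_ge0 h_le].
rewrite /negsq; set z := 1 - x - y.
set X := Num.min x 0; set Y := Num.min y 0; set Z := Num.min z 0.
have XY_ge0 : 0 <= X * Y by rewrite mulr_le0 ?min0_le0.
have XZ_ge0 : 0 <= X * Z by rewrite mulr_le0 ?min0_le0.
have SX : X * dx x y h <= a1 * (X * Z) + a4 * (X * Y).
  have -> : X * dx x y h = a1 * (X * z) + a4 * (X * y) - (k + h) * (X * x).
    by rewrite /dx /z; ring.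
  rewrite min0_mulr; have := ler_wpM2l a1_ge0 (min0_mul_le x z).
  have := ler_wpM2l a4_ge0 (min0_mul_le x y).
  have : 0 <= (k + h) * X ^+ 2 by rewrite mulr_ge0 ?sqr_ge0 ?addr_ge0.
  rewrite -/X -/Y -/Z; lra.
have SY : Y * dy x y h <= c * (X * Y).
  have -> : Y * dy x y h = h * (Y * x) - a4 * (Y * y) by rewrite /dy; ring.
  rewrite min0_mulr; have := ler_wpM2l h_ge0 (min0_mul_le y x).
  have := ler_wpM2r XY_ge0 h_le.
  have : 0 <= a4 * Y ^+ 2 by rewrite mulr_ge0 ?sqr_ge0.
  rewrite -/X -/Y [Y * X]mulrC; lra.
have SZ : Z * (- dx x y h - dy x y h) <= k * (X * Z).
  have -> : Z * (- dx x y h - dy x y h) = k * (Z * x) - a1 * (Z * z).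
    by rewrite /dx /dy /z; ring.
  rewrite min0_mulr; have := ler_wpM2l k_ge0 (min0_mul_le z x).
  have : 0 <= a1 * Z ^+ 2 by rewrite mulr_ge0 ?sqr_ge0.
  rewrite -/X -/Z [Z * X]mulrC; lra.
have AMGM (U V : R) : 2 * (U * V) <= U ^+ 2 + V ^+ 2.
  by have := sqr_ge0 (U - V); rewrite sqrrB; lra.
have := ler_wpM2l (addr_ge0 a1_ge0 k_ge0) (AMGM X Z).
have := ler_wpM2l (addr_ge0 a4_ge0 (le_trans h_ge0 h_le)) (AMGM X Y).
have : 0 <= (a1 + k) * Y ^+ 2 by rewrite mulr_ge0 ?sqr_ge0 ?addr_ge0.
have : 0 <= (a4 + c) * Z ^+ 2.
  by rewrite mulr_ge0 ?sqr_ge0 ?addr_ge0 // (le_trans h_ge0 h_le).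
lra.
Qed.

Lemma dx_ge_on_simplex (x y h : R) :
  0 <= x -> 0 <= y -> x + y <= 1 -> h <= c ->
  Num.min a1 a4 - (Num.min a1 a4 + k + c) * x <= dx x y h.
Proof.
move=> x_ge0 y_ge0 xy_le1 h_le; rewrite /dx.
have mu_a1 : Num.min a1 a4 <= a1 by rewrite ge_min lexx.
have mu_a4 : Num.min a1 a4 <= a4 by rewrite ge_min lexx orbT.
nra.
Qed.

Lemma simplex_invariant [h x y : R -> R] :
  (forall t, 0 <= h t <= c) ->
  {within `[0, +oo[, continuous x} -> {within `[0, +oo[, continuous y} ->
  (forall t : R, 0 < t -> is_derive t 1 x (dx (x t) (y t) (h t))) ->
  (forall t : R, 0 < t -> is_derive t 1 y (dy (x t) (y t) (h t))) ->
  0 <= x 0 -> 0 <= y 0 -> x 0 + y 0 <= 1 ->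
  forall t : R, 0 <= t -> [/\ 0 <= x t, 0 <= y t & x t + y t <= 1].
Proof.
move=> h_bound xc yc xd yd x0 y0 xy0.
pose z t : R := 1 - x t - y t.
pose N t := negsq (x t) + negsq (y t) + negsq (z t).
have zd (t : R) : 0 < t -> is_derive t 1 z
    (- dx (x t) (y t) (h t) - dy (x t) (y t) (h t)).
  move=> t0; have := is_deriveB (is_derive_cst (1 : R) t 1) (xd t t0).
  by move/is_deriveB/(_ (yd t t0)); rewrite sub0r.
pose dN t := 2 * Num.min (x t) 0 * dx (x t) (y t) (h t)
  + 2 * Num.min (y t) 0 * dy (x t) (y t) (h t)
  + 2 * Num.min (z t) 0 * (- dx (x t) (y t) (h t) - dy (x t) (y t) (h t)).
have Nd (t : R) : 0 < t -> is_derive t 1 N (dN t).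
  move=> t0; apply: is_deriveD; [apply: is_deriveD|];
    apply: is_derive1_comp (is_derive_negsq _) _;
    by [apply: xd | apply: yd | apply: zd].
have zc : {within `[0, +oo[, continuous z}.
  by move=> t; exact: continuousB (continuousB (cvg_cst _) (xc t)) (yc t).
have Nc : {within `[0, +oo[, continuous N}.
  move=> t; have := continuous_comp (xc t) (continuous_negsq _).
  have := continuous_comp (yc t) (continuous_negsq _).
  have := continuous_comp (zc t) (continuous_negsq _).
  move=> nz ny nx; exact: continuousD (continuousD nx ny) nz.
have N0 : N 0 <= 0.
  have : [/\ negsq (x 0) == 0, negsq (y 0) == 0 & negsq (z 0) == 0].
    by rewrite !negsq_eq0 /z; split => //; lra.
  by rewrite /N; case=> /eqP-> /eqP-> /eqP->; rewrite !addr0.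
have N_le (t : R) : 0 < t -> dN t <= (a1 + k + a4 + c) * N t.
  by move=> _; exact: negsq_penalty_deriv_le.
move=> t t0; have Nt := gronwall_le0 Nc Nd N_le N0 t0.
have := negsq_ge0 (x t); have := negsq_ge0 (y t); have := negsq_ge0 (z t).
move: Nt; rewrite /N => Nt nz ny nx.
have : [/\ negsq (x t) == 0, negsq (y t) == 0 & negsq (z t) == 0].
  by split; apply/eqP; lra.
by rewrite !negsq_eq0 /z => -[? ? ?]; split => //; lra.
Qed.

Lemma simplex_eventually_x_ge [h x y : R -> R] : 0 < Num.min a1 a4 ->
  (forall t, 0 <= h t <= c) ->
  {within `[0, +oo[, continuous x} -> {within `[0, +oo[, continuous y} ->
  (forall t : R, 0 < t -> is_derive t 1 x (dx (x t) (y t) (h t))) ->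
  (forall t : R, 0 < t -> is_derive t 1 y (dy (x t) (y t) (h t))) ->
  0 <= x 0 -> 0 <= y 0 -> x 0 + y 0 <= 1 ->
  \forall t \near +oo, Num.min a1 a4 / (2 * (Num.min a1 a4 + k + c)) <= x t.
Proof.
move=> mu_gt0 h_bound xc yc xd yd x0 y0 xy0.
have c_ge0 : 0 <= c by have /andP[/le_trans] := h_bound 0; apply.
have t_gt0 : \forall t \near +oo, (0 : R) < t.
  by apply: nbhs_pinfty_gt; rewrite num_real.
apply: (eventually_ge_of_deriv_ge _ (fun t => dx (x t) (y t) (h t))) => //.
  by rewrite -addrA (lt_le_trans mu_gt0) // lerDl addr_ge0.
- by near=> t; apply: xd; near: t.
- near=> t; have /andP[_ h_le] := h_bound t.
  have /(simplex_invariant h_bound xc yc xd yd x0 y0 xy0)[] : 0 <= t.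
    by apply: ltW; near: t.
  by move=> x_ge0 y_ge0 xy_le1; apply: dx_ge_on_simplex.
Unshelve. all: by end_near.
Qed.
End SimplexInvariance.

Lemma hill_bounds {R : realType} (b m K w n : R) : 0 < b -> 1 <= m -> 0 < K ->
  b <= b * ((1 + m / K * w `^ n) / (1 + 1 / K * w `^ n)) <= b * m.
Proof.
move=> b_gt0 m_ge1 K_gt0; rewrite ler_pMr // ler_pM2l //.
have q_ge0 : 0 <= w `^ n / K by rewrite divr_ge0 ?powR_ge0 ?ltW.
rewrite mulrAC -mulrA mul1r [K^-1 * _]mulrC.
rewrite ler_pdivlMr ?ler_pdivrMr ?ltr_wpDr // mul1r; apply/andP; split; nra.
Qed.

Theorem proposition3p1 (R : realType)
  (kON kOFF kI alpha_p1 alpha_p2 gamma_p1 gamma_m2 alpha_m2I beta_m2A Tc vb n : R)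
  (hkON : 0 < kON) (hkOFF : 0 < kOFF) (hkI : 0 < kI)
  (hap1 : 0 < alpha_p1) (hap2 : 0 < alpha_p2) (hgp1 : 0 < gamma_p1)
  (hgm2 : 0 < gamma_m2) (ham2I : 0 < alpha_m2I) (hbm2A : 0 < beta_m2A)
  (hTc : 0 < Tc) (hvb : 1 < vb) (hn : 1 <= n)
  (x y s v : R -> R) :
  let a1 := kON in
  let a3 := kON + kOFF in
  let a4 := kI in
  let a5 := alpha_p1 in
  let a6 := gamma_p1 in
  let a7 := alpha_m2I in
  let a8 := gamma_m2 + alpha_p1 + alpha_p2 in
  let a9 := beta_m2A / vb in
  let a10 := vb / (Tc `^ n) in
  let a11 := 1 / (Tc `^ n) in
  let H := fun w : R => a9 * ((1 + a10 * w `^ n) / (1 + a11 * w `^ n)) in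
  (* the solution is continuous on [0, +oo) ... *)
  {within `[0, +oo[, continuous x} ->
  {within `[0, +oo[, continuous y} ->
  {within `[0, +oo[, continuous s} ->
  {within `[0, +oo[, continuous v} ->
  (* ... and satisfies the ODE system for t > 0 *)
  (forall t : R, 0 < t ->
     is_derive t 1 x (a1 + (a4 - a1) * y t - (a3 + H (v t)) * x t)) ->
  (forall t : R, 0 < t -> is_derive t 1 y (H (v t) * x t - a4 * y t)) ->
  (forall t : R, 0 < t -> is_derive t 1 s (a7 * x t - a8 * s t)) ->
  (forall t : R, 0 < t -> is_derive t 1 v (a5 * s t - a6 * v t)) ->
  (* nonnegative initial conditions with x(0) + y(0) <= 1 *)
  0 <= x 0 -> 0 <= y 0 -> 0 <= s 0 -> 0 <= v 0 -> x 0 + y 0 <= 1 ->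
  exists mx my : R, 0 < mx /\ 0 < my /\
    (mx%:E <= liminf_infty x)%E /\ (my%:E <= liminf_infty y)%E.
Proof.
move=> a1 a3 a4 a5 a6 a7 a8 a9 a10 a11 H xc yc _ _ xd yd _ _ x0 y0 _ _ xy0.
have vb_gt0 : 0 < vb := lt_trans ltr01 hvb.
have a9_gt0 : 0 < a9 by rewrite divr_gt0.
have H_bound w : a9 <= H w <= a9 * vb.
  by apply: hill_bounds; rewrite ?ltW ?powR_gt0.
have h_bound t : 0 <= H (v t) <= a9 * vb.
  by have /andP[a9_le ->] := H_bound (v t); rewrite (le_trans (ltW a9_gt0)).
have mu_gt0 : 0 < Num.min kON kI by rewrite lt_min hkON hkI.
have x_ge := simplex_eventually_x_ge (ltW hkON) (ltW hkI) (ltW hkOFF) mu_gt0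
  h_bound xc yc xd yd x0 y0 xy0.
set mx := _ / _ in x_ge.
have mx_gt0 : 0 < mx by rewrite divr_gt0 // mulr_gt0 // !addr_gt0 // mulr_gt0.
have y_ge : \forall t \near +oo, a9 * mx / (2 * kI) <= y t.
  apply: (eventually_ge_of_deriv_ge _ (fun t => H (v t) * x t - a4 * y t)
    _ _ hkI (mulr_gt0 a9_gt0 mx_gt0)).
  - near=> t; apply: yd; near: t.
    by apply: nbhs_pinfty_gt; rewrite num_real.
  - near=> t; have /andP[a9_le _] := H_bound (v t).
    have mx_le : mx <= x t by near: t.
    by rewrite lerD2r (ler_pM (ltW a9_gt0) (ltW mx_gt0) a9_le mx_le).
exists mx, (a9 * mx / (2 * kI)); split; first exact: mx_gt0.
split; first by rewrite divr_gt0 // mulr_gt0.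
by split; apply: liminf_infty_ge.
Unshelve. all: by end_near.
Qed.
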